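(* Let $\mathcal C$ be a category, $A$ a zigzag of length $n$ in $\mathcal C$, and $i\in[n+1]$ (i.e. $0\le i\le n$). Let $A'$ be the zigzag of length $n+1$ obtained from $A$ by inserting the identity cospan $A(r_i)\xrightarrow{\mathrm{id}}A(r_i)\xleftarrow{\mathrm{id}}A(r_i)$ at position $i$, i.e. $A'(r_j)=A(r_j)$ and $A'(s_j)=A(s_j)$ for $j<i$, $A'(r_i)=A'(s_i)=A'(r_{i+1})=A(r_i)$ with identity legs, and $A'(r_{j+1})=A(r_j)$, $A'(s_{j+1})=A(s_j)$ for $j\ge i$ (with the cospan legs of $A$). Then the zigzag map $f:A\to A'$ whose singular map is the face map $d_i:[n]\to[n+1]$ and all of whose regular and singular slices are identities is $\pi$-cocartesian.
   Context: Notation: for $n\ge 0$, $[n]$ denotes $\{0,\dots,n-1\}$; $\Delta_+$ is the category of these finite total orders and order-preserving maps. The $i$-th face map $d_i:[n]\to[n+1]$ is the unique injective order-preserving map omitting $i$ from its image. For monotone $\varphi:[n]\to[m]$ define $\hat\varphi:[m+1]\to[n+1]$ by $\hat\varphi(i)=\min(\{j\in[n]:\varphi(j)\ge i\}\cup\{n\})$. Zigzags: in a category $\mathcal C$, a zigzag $X$ of length $n$ is a diagram $X(r_0)\xrightarrow{x_0} X(s_0)\xleftarrow{x'_0} X(r_1)\to\cdots\xrightarrow{x_{n-1}} X(s_{n-1})\xleftarrow{x'_{n-1}} X(r_n)$. A zigzag map $f:X\to Y$ (lengths $n$, $m$) consists of a monotone $f_s:[n]\to[m]$, regular slices $f(r_i):X(r_{\hat{f_s}(i)})\to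 Y(r_i)$ for $0\le i\le m$ and singular slices $f(s_j):X(s_j)\to Y(s_{f_s(j)})$ for $0\le j<n$, such that for each $0\le i<m$: if $f_s^{-1}(i)\neq\emptyset$ with least element $p$, greatest $q$, then $f(s_p)\circ x_p=y_i\circ f(r_i)$, $f(s_q)\circ x'_q=y'_i\circ f(r_{i+1})$, $f(s_j)\circ x'_j=f(s_{j+1})\circ x_{j+1}$ for $p\le j<q$; if $f_s^{-1}(i)=\emptyset$ then $y_i\circ f(r_i)=y'_i\circ f(r_{i+1})$. Composition: $(g\circ f)_s=g_s\circ f_s$, $(g\circ f)(s_j)=g(s_{f_s(j)})\circ f(s_j)$, $(g\circ f)(r_i)=g(r_i)\circ f(r_{\hat{g_s}(i)})$. This gives the category $Z(\mathcal C)$. The functor $\pi:Z(\mathcal C)\to\Delta_+$ sends a zigzag of length $n$ to $[n]$ and $f$ to $f_s$. A map $f:x\to y$ is $\pi$-cocartesian if for every map $h:x\to y'$ and every $u:\pi(y)\to\pi(y')$ with $u\circ\pi(f)=\pi(h)$ there is a unique $v:y\to y'$ with $v\circ f=h$ and $\pi(v)=u$. *)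

(* Categories are given in the (equivalent, standard)
   "arrows-only"/one-sorted presentation: objects, morphisms, domain, codomain,
   identities and a composition g∘f that is meaningful when cod f = dom g. *)
From mathcomp Require Import all_boot.
Set Implicit Arguments. Unset Strict Implicit. Unset Printing Implicit Defensive.

Record Category := MkCategory {
  Ob : Type;
  Mor : Type;
  dom : Mor -> Ob;
  cod : Mor -> Ob;
  idm : Ob -> Mor;
  comp : Mor -> Mor -> Mor;            (* comp g f = g ∘ f *)
  dom_id : forall a, dom (idm a) = a;
  cod_id : forall a, cod (idm a) = a;
  dom_comp : forall g f, cod f = dom g -> dom (comp g f) = dom f;
  cod_comp : forall g f, cod f = dom g -> cod (comp g f) = cod g;
  comp_id_l : forall f, comp (idm (cod f)) f = f;
  comp_id_r : forall f, comp f (idm (dom f)) = f;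
  comp_assoc : forall h g f, cod f = dom g -> cod g = dom h ->
     comp h (comp g f) = comp (comp h g) f }.

Arguments dom {c} : rename. Arguments cod {c} : rename. Arguments idm {c} : rename. Arguments comp {c} : rename.

(* Morphisms of Delta_+ : monotone maps [n] -> [m], [n] = 'I_n. *)
Definition monotone n m (f : 'I_n -> 'I_m) : Prop :=
  forall x y : 'I_n, x <= y -> f x <= f y.

Definition hat n m (f : 'I_n -> 'I_m) (i : 'I_m.+1) : 'I_n.+1 :=
  inord (\big[minn/n]_(j < n | i <= f j) j).

(* A zigzag of length zlen: regular objects r_0..r_n, singular s_0..s_{n-1},
   forward legs x_j : r_j -> s_j, backward legs x'_j : r_{j+1} -> s_j. *)
Record zigzag (C : Category) := Zigzag {
  zlen : nat;
  zr : 'I_zlen.+1 -> Ob C;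
  zs : 'I_zlen -> Ob C;
  zf : 'I_zlen -> Mor C;
  zb : 'I_zlen -> Mor C }.

Arguments zlen {C}. Arguments zr {C}. Arguments zs {C}. Arguments zf {C}. Arguments zb {C}.

Definition is_zigzag (C : Category) (X : zigzag C) : Prop :=
  forall j : 'I_(zlen X),
    [/\ dom (zf X j) = zr X (widen_ord (leqnSn _) j),
        cod (zf X j) = zs X j,
        dom (zb X j) = zr X (lift ord0 j)
      & cod (zb X j) = zs X j].

Record zmap (C : Category) (X Y : zigzag C) := ZMap {
  zms : 'I_(zlen X) -> 'I_(zlen Y);          (* singular map f_s *)
  zmr : 'I_(zlen Y).+1 -> Mor C;             (* regular slices f(r_i) *)
  zmsg : 'I_(zlen X) -> Mor C }.             (* singular slices f(s_j) *)

Arguments zms {C X Y}. Arguments zmr {C X Y}. Arguments zmsg {C X Y}.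

Definition is_zmap (C : Category) (X Y : zigzag C) (f : zmap X Y) : Prop :=
  [/\ is_zigzag X, is_zigzag Y & monotone (zms f)] /\
  [/\
      (forall i : 'I_(zlen Y).+1,
          dom (zmr f i) = zr X (hat (zms f) i) /\ cod (zmr f i) = zr Y i),
      (forall j : 'I_(zlen X),
          dom (zmsg f j) = zs X j /\ cod (zmsg f j) = zs Y (zms f j)),
      (forall (i : 'I_(zlen Y)) (p q : 'I_(zlen X)),
          zms f p = i -> zms f q = i ->
          (forall j, zms f j = i -> p <= j <= q) ->
          [/\ comp (zmsg f p) (zf X p) = comp (zf Y i) (zmr f (widen_ord (leqnSn _) i)),
              comp (zmsg f q) (zb X q) = comp (zb Y i) (zmr f (lift ord0 i))
            & forall j j' : 'I_(zlen X), p <= j < q -> (j' : nat) = j.+1 ->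
                comp (zmsg f j) (zb X j) = comp (zmsg f j') (zf X j')])
    &
      (forall i : 'I_(zlen Y), (forall j, zms f j <> i) ->
          comp (zf Y i) (zmr f (widen_ord (leqnSn _) i))
          = comp (zb Y i) (zmr f (lift ord0 i)))].

Definition zcomp (C : Category) (X Y Z : zigzag C) (g : zmap Y Z) (f : zmap X Y)
  : zmap X Z :=
  {| zms := zms g \o zms f;
     zmr := fun i => comp (zmr g i) (zmr f (hat (zms g) i));
     zmsg := fun j => comp (zmsg g (zms f j)) (zmsg f j) |}.

Definition pi_cocartesian (C : Category) (X Y : zigzag C) (f : zmap X Y) : Prop :=
  forall (Y' : zigzag C) (h : zmap X Y'), is_zmap h ->
  forall u : 'I_(zlen Y) -> 'I_(zlen Y'), monotone u ->
    u \o zms f = zms h ->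
    exists! v : zmap Y Y', [/\ is_zmap v, zcomp v f = h & zms v = u].

(* F applied to k viewed as an element of 'I_n (d if k >= n; never used out of range) *)
Definition ord_app (T : Type) n (F : 'I_n -> T) (d : T) (k : nat) : T :=
  if (insub k : option 'I_n) is Some k0 then F k0 else d.

Section Insert.
Variables (C : Category) (A : zigzag C) (i : 'I_(zlen A).+1).

Definition ins_reg (k : 'I_(zlen A).+2) : Ob C :=
  zr A (inord (if k <= i then (k : nat) else k.-1)).

Definition ins_sing (j : 'I_(zlen A).+1) : Ob C :=
  if j < i then ord_app (zs A) (zr A i) j
  else if j == i then zr A i
  else ord_app (zs A) (zr A i) j.-1.

Definition ins_fw (j : 'I_(zlen A).+1) : Mor C :=
  if j < i then ord_app (zf A) (idm (zr A i)) j
  else if j == i then idm (zr A i)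
  else ord_app (zf A) (idm (zr A i)) j.-1.

Definition ins_bw (j : 'I_(zlen A).+1) : Mor C :=
  if j < i then ord_app (zb A) (idm (zr A i)) j
  else if j == i then idm (zr A i)
  else ord_app (zb A) (idm (zr A i)) j.-1.

Definition insert_id : zigzag C :=
  {| zlen := (zlen A).+1; zr := ins_reg; zs := ins_sing; zf := ins_fw; zb := ins_bw |}.

(* The map A -> A' with singular map the face map d_i (= lift i) and identity slices *)
Definition face_zmap : zmap A insert_id :=
  @ZMap C A insert_id
    (lift i : 'I_(zlen A) -> 'I_(zlen A).+1)
    (fun k => idm (zr insert_id k))
    (fun j => idm (zs A j)).
End Insert.

Arguments insert_id {C} A i.
Arguments face_zmap {C} A i.

From mathcomp Require Import all_boot zify.
From Stdlib Require Import FunctionalExtensionality.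
Set Implicit Arguments. Unset Strict Implicit. Unset Printing Implicit Defensive.

(* The fibre conditions defining a zigzag map are equivalent to local ones:
   coherence at the first and at the last index of each fibre of the singular
   map, between consecutive indices of a fibre, and over empty fibres.
   Given h : A -> Y and u with u \o d_i = h_s, any factorisation v : A' -> Y
   over u agrees with h on every regular slice and on the singular slices at
   d_i(j); its only free datum is the slice at the inserted height i, and
   local coherence forces it: h(s_{i-1}) \o a'_{i-1} when i-1 lies in the
   u-fibre of i, and y_{u i} \o h(r_{u i}) when i starts its fibre.  With this
   choice v is coherent, by a case analysis on where i sits in its fibre. *)

Lemma bigmin_leq (I : eqType) (r : seq I) (P : pred I) (F : I -> nat) d j :
  j \in r -> P j -> \big[minn/d]_(x <- r | P x) F x <= F j.
Proof.
elim: r => // x r IHr; rewrite inE big_cons => /predU1P[<- -> | jr Pj].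
  exact: geq_minl.
case: (P x); last exact: IHr.
exact: leq_trans (geq_minr _ _) (IHr jr Pj).
Qed.

Section Hat.
Variables (n m : nat) (f : 'I_n -> 'I_m).
Hypothesis f_mono : monotone f.

Lemma hat_val (k : 'I_m.+1) : (hat f k : nat) = \big[minn/n]_(j < n | k <= f j) j.
Proof.
rewrite /hat inordK // ltnS.
by apply: (big_ind (fun b => b <= n)) => // [x y|j _]; [lia | exact: ltnW].
Qed.

Lemma leq_hat (k : 'I_m.+1) (j : 'I_n) : (hat f k <= j) = (k <= f j).
Proof.
rewrite hat_val; apply/idP/idP => [|kfj]; last first.
  by apply: bigmin_leq; first exact: mem_index_enum.
apply: contraTT; rewrite -!ltnNge => fjk.
apply: (big_ind (fun b => j < b)) => // [x y jx jy | x kfx].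
  by rewrite leq_min jx jy.
rewrite ltnNge; apply/negP => xj.
by have := leq_trans kfx (f_mono xj); rewrite leqNgt fjk.
Qed.

Lemma hat_eq (k : 'I_m.+1) c : c <= n -> (forall j : 'I_n, (k <= f j) = (c <= j)) ->
  (hat f k : nat) = c.
Proof.
move=> cn Hc; have := ltn_ord (hat f k); rewrite ltnS => hn.
case: (ltngtP (hat f k) c) => // [hc | ch].
  have hn' : hat f k < n by lia.
  by have := Hc (Ordinal hn'); rewrite -leq_hat leqnn leqNgt hc.
have cn' : c < n by lia.
by have := Hc (Ordinal cn'); rewrite -leq_hat leqnn leqNgt ch.
Qed.
End Hat.

Lemma eq_hat n m (f g : 'I_n -> 'I_m) : f =1 g -> hat f =1 hat g.
Proof. by move=> fg k; rewrite /hat; congr inord; apply: eq_bigl => j; rewrite fg. Qed.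

Lemma hat_comp n m l (f : 'I_n -> 'I_m) (g : 'I_m -> 'I_l) k :
  monotone f -> monotone g -> hat (g \o f) k = hat f (hat g k).
Proof.
move=> f_mono g_mono; apply/val_inj/hat_eq => [x y xy | | j].
- exact/g_mono/f_mono.
- by rewrite /= -ltnS.
- by rewrite /= leq_hat // leq_hat.
Qed.

Lemma lift_monotone n (i : 'I_n.+1) : monotone (lift i).
Proof. by move=> x y; rewrite /= leq_bump2. Qed.

Lemma hat_lift n (i : 'I_n.+1) k :
  (hat (lift i) k : nat) = if k <= i then k : nat else k.-1.
Proof.
apply: hat_eq => [|| j]; first exact: lift_monotone.
  by move: (ltn_ord k) (ltn_ord i); case: ifP; lia.
by rewrite /= /bump; case: ifP; lia.
Qed.

Section Fibres.
Variables (n m : nat) (s : 'I_n -> 'I_m).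

Definition first_in_fibre (j : 'I_n) : Prop := forall j', s j' = s j -> j <= j'.
Definition last_in_fibre (j : 'I_n) : Prop := forall j', s j' = s j -> j' <= j.

Lemma fibre_extremes j : exists p q,
  [/\ s p = s j, s q = s j & forall j', s j' = s j -> p <= j' <= q].
Proof.
case: (@arg_minnP _ j (fun x => s x == s j) (fun x => x) (eqxx _)) => p /eqP sp p_min.
case: (@arg_maxnP _ j (fun x => s x == s j) (fun x => x) (eqxx _)) => q /eqP sq q_max.
by exists p, q; split => // j' /eqP sj'; rewrite p_min //=; apply: q_max; rewrite sj'.
Qed.

Lemma monotone_squeeze k (p q x : 'I_n) : monotone s ->
  s p = k -> s q = k -> p <= x <= q -> s x = k.
Proof.
move=> s_mono sp sq /andP[px xq]; apply/val_inj/eqP.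
by rewrite eqn_leq -{1}sq -sp !s_mono.
Qed.
End Fibres.

Lemma first_in_fibre_lift n m (u : 'I_n.+1 -> 'I_m) (s : 'I_n -> 'I_m) i j :
  (forall j, u (lift i j) = s j) -> first_in_fibre u (lift i j) -> first_in_fibre s j.
Proof. by move=> us u_first j'; rewrite -!us => /u_first; rewrite /= leq_bump2. Qed.

Lemma last_in_fibre_lift n m (u : 'I_n.+1 -> 'I_m) (s : 'I_n -> 'I_m) i j :
  (forall j, u (lift i j) = s j) -> last_in_fibre u (lift i j) -> last_in_fibre s j.
Proof. by move=> us u_last j'; rewrite -!us => /u_last; rewrite /= leq_bump2. Qed.

Section LocalCoherence.
Variables (C : Category) (X Y : zigzag C) (f : zmap X Y).
Local Notation s := (zms f).

Definition zmap_typed : Prop :=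
  [/\ is_zigzag X, is_zigzag Y, monotone s,
      forall i, dom (zmr f i) = zr X (hat s i) /\ cod (zmr f i) = zr Y i
    & forall j, dom (zmsg f j) = zs X j /\ cod (zmsg f j) = zs Y (s j)].

Definition coherent_first : Prop := forall j, first_in_fibre s j ->
  comp (zmsg f j) (zf X j) = comp (zf Y (s j)) (zmr f (widen_ord (leqnSn _) (s j))).

Definition coherent_last : Prop := forall j, last_in_fibre s j ->
  comp (zmsg f j) (zb X j) = comp (zb Y (s j)) (zmr f (lift ord0 (s j))).

Definition coherent_steps : Prop :=
  forall j j' : 'I_(zlen X), (j' : nat) = j.+1 -> s j = s j' ->
  comp (zmsg f j) (zb X j) = comp (zmsg f j') (zf X j').

Definition coherent_empty : Prop := forall i, (forall j, s j <> i) ->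
  comp (zf Y i) (zmr f (widen_ord (leqnSn _) i)) = comp (zb Y i) (zmr f (lift ord0 i)).

Definition locally_coherent : Prop :=
  [/\ coherent_first, coherent_last, coherent_steps & coherent_empty].

Lemma is_zmapP : is_zmap f <-> zmap_typed /\ locally_coherent.
Proof.
split=> [[[zX zY s_mono] [typ_r typ_s fib emp]] |
         [[zX zY s_mono typ_r typ_s] [L1 L2 L3 L4]]].
  split=> //; split=> // [j j_first | j j_last | j j' jj' sjj'].
  - have [p [q [_ sq pq]]] := fibre_extremes s j.
    have bounds j' : s j' = s j -> j <= j' <= q.
      by move=> /[dup] /j_first -> /pq /andP[].
    by case: (fib _ j q erefl sq bounds).
  - have [p [q [sp _ pq]]] := fibre_extremes s j.
    have bounds j' : s j' = s j -> p <= j' <= j.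
      by move=> /[dup] /j_last -> /pq /andP[-> _].
    by case: (fib _ p j sp erefl bounds).
  - have [p [q [sp sq pq]]] := fibre_extremes s j.
    have [_ _] := fib _ p q sp sq pq; apply; last exact: jj'.
    by case/andP: (pq _ erefl) => -> _; case/andP: (pq _ (esym sjj')); rewrite jj'.
split=> //; split=> // k p q sp sq pq; split.
- by rewrite -sp; apply: L1 => j'; rewrite sp => /pq /andP[].
- by rewrite -sq; apply: L2 => j'; rewrite sq => /pq /andP[].
- move=> j j' /andP[pj jq] jj'; apply: L3 => //.
  have sj : s j = k by apply: (monotone_squeeze s_mono sp sq); rewrite pj ltnW.
  rewrite sj; symmetry; apply: (monotone_squeeze s_mono sp sq).
  by rewrite jj' jq (leq_trans pj).
Qed.
End LocalCoherence.

Lemma lift_lt_pivot n (i : 'I_n.+1) (j : 'I_n) : (lift i j < i) = (j < i).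
Proof. rewrite /= /bump; lia. Qed.

Lemma lift_le_pivot n (i : 'I_n.+1) (j : 'I_n) : (lift i j <= i) = (j < i).
Proof. rewrite /= /bump; lia. Qed.

Lemma pivot_le_lift n (i : 'I_n.+1) (j : 'I_n) : (i <= lift i j) = (i <= j).
Proof. rewrite /= /bump; lia. Qed.

Lemma lift_below n (i : 'I_n.+1) (j : 'I_n) : j < i -> lift i j = j :> nat.
Proof. rewrite /= /bump; lia. Qed.

Lemma ord_app_ord T n (F : 'I_n -> T) d (j : 'I_n) (k : nat) :
  k = j -> ord_app F d k = F j.
Proof. by move->; rewrite /ord_app valK. Qed.

Section Insertion.
Variables (C : Category) (A : zigzag C) (i : 'I_(zlen A).+1).
Local Notation n := (zlen A).
Local Notation A' := (insert_id A i).

Lemma insert_at_lift T (F : 'I_n -> T) d (j : 'I_n) :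
  (if lift i j < i then ord_app F d (lift i j)
   else if lift i j == i then d else ord_app F d (lift i j).-1) = F j.
Proof.
rewrite lift_eqF lift_lt_pivot.
by case: ifP => ji; apply: ord_app_ord; rewrite /= /bump; lia.
Qed.

Lemma zs_insert_lift j : zs A' (lift i j) = zs A j.
Proof. exact: insert_at_lift. Qed.

Lemma zf_insert_lift j : zf A' (lift i j) = zf A j.
Proof. exact: insert_at_lift. Qed.

Lemma zb_insert_lift j : zb A' (lift i j) = zb A j.
Proof. exact: insert_at_lift. Qed.

Lemma zs_insert_gap : zs A' i = zr A i.
Proof. by rewrite /= /ins_sing ltnn eqxx. Qed.

Lemma zf_insert_gap : zf A' i = idm (zr A i).
Proof. by rewrite /= /ins_fw ltnn eqxx. Qed.

Lemma zb_insert_gap : zb A' i = idm (zr A i).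
Proof. by rewrite /= /ins_bw ltnn eqxx. Qed.

Lemma zr_insertE (k : 'I_n.+2) (x : 'I_n.+1) :
  (if k <= i then k : nat else k.-1) = x -> zr A' k = zr A x.
Proof.
by move=> kx; rewrite /= /ins_reg; congr (zr A _); apply: val_inj; rewrite /= kx inordK.
Qed.

Lemma zr_insert_hat k : zr A' k = zr A (hat (lift i) k).
Proof. by apply: zr_insertE; rewrite hat_lift. Qed.

Lemma zr_insert_gap_l : zr A' (widen_ord (leqnSn _) i) = zr A i.
Proof. by apply: zr_insertE; rewrite /= leqnn. Qed.

Lemma zr_insert_gap_r : zr A' (lift ord0 i) = zr A i.
Proof. by apply: zr_insertE; rewrite /= /bump ltnn. Qed.

Lemma insert_zigzag : is_zigzag A -> is_zigzag A'.
Proof.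
move=> zA j; case: (unliftP i j) => [a ->|->].
  have [fd fc bd bc] := zA a.
  rewrite zf_insert_lift zb_insert_lift zs_insert_lift fd fc bd bc.
  by split=> //; symmetry; apply: zr_insertE; rewrite /= /bump; case: ifP; lia.
rewrite zf_insert_gap zb_insert_gap zs_insert_gap zr_insert_gap_l zr_insert_gap_r.
by rewrite dom_id cod_id.
Qed.

Lemma face_zmap_typed : is_zigzag A -> zmap_typed (face_zmap A i).
Proof.
move=> zA; split=> [|||k|j] //.
- exact: insert_zigzag.
- exact: lift_monotone.
- by rewrite dom_id cod_id zr_insert_hat.
- by rewrite dom_id cod_id zs_insert_lift.
Qed.

Lemma face_zmap_coherent : is_zigzag A -> locally_coherent (face_zmap A i).
Proof.
move=> zA; have zA' := insert_zigzag zA.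
split=> [j _ | j _ | j j' jj' /lift_inj jj | k k_gap]; cbn [zms zmr zmsg face_zmap].
- have [fd fc _ _] := zA j; have [fd' _ _ _] := zA' (lift i j).
  by rewrite zf_insert_lift in fd' *; rewrite -fd' comp_id_r -fc comp_id_l.
- have [_ _ bd bc] := zA j; have [_ _ bd' _] := zA' (lift i j).
  by rewrite zb_insert_lift in bd' *; rewrite -bd' comp_id_r -bc comp_id_l.
- by move: jj'; rewrite jj; lia.
- case: (unliftP i k) => [j kj | ->]; first by case: (k_gap j).
  by rewrite zf_insert_gap zb_insert_gap zr_insert_gap_l zr_insert_gap_r.
Qed.
End Insertion.

Lemma zmap_ext (C : Category) (X Y : zigzag C) (f g : zmap X Y) :
  zms f =1 zms g -> zmr f =1 zmr g -> zmsg f =1 zmsg g -> f = g.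
Proof.
by case: f g => s r t [s' r' t'] /= /functional_extensionality ->
  /functional_extensionality -> /functional_extensionality ->.
Qed.

Lemma zcomp_face_zmap (C : Category) (A : zigzag C) i (Z : zigzag C)
    (g : zmap (insert_id A i) Z) :
  zmap_typed g ->
  [/\ zms (zcomp g (face_zmap A i)) =1 zms g \o lift i,
      zmr (zcomp g (face_zmap A i)) =1 zmr g
    & zmsg (zcomp g (face_zmap A i)) =1 zmsg g \o lift i].
Proof.
case=> _ _ _ typ_r typ_s; split=> // [k | j]; cbn [zms zmr zmsg zcomp face_zmap].
  by case: (typ_r k) => <- _; rewrite comp_id_r.
by case: (typ_s (lift i j)) => dg _; rewrite -(zs_insert_lift i) -dg comp_id_r.
Qed.

Section Factorisation.
Variables (C : Category) (A : zigzag C) (i : 'I_(zlen A).+1).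
Variables (Y : zigzag C) (h : zmap A Y) (u : 'I_(zlen A).+1 -> 'I_(zlen Y)).
Hypotheses (h_typed : zmap_typed h) (h_coherent : locally_coherent h).
Local Notation n := (zlen A).
Hypotheses (u_mono : monotone u) (u_lift : forall j : 'I_n, u (lift i j) = zms h j).
Local Notation A' := (insert_id A i).

Definition gap_slice : Mor C :=
  if [pick a : 'I_n | (a.+1 == i) && (zms h a == u i)] is Some a
  then comp (zmsg h a) (zb A a)
  else comp (zf Y (u i)) (zmr h (widen_ord (leqnSn _) (u i))).

Variant gap_slice_spec : Mor C -> Prop :=
  | GapSliceStep (a : 'I_n) of a.+1 = i & zms h a = u i :
      gap_slice_spec (comp (zmsg h a) (zb A a))
  | GapSliceFirst of first_in_fibre u i :
      gap_slice_spec (comp (zf Y (u i)) (zmr h (widen_ord (leqnSn _) (u i)))).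

Lemma gap_sliceP : gap_slice_spec gap_slice.
Proof.
rewrite /gap_slice; case: pickP => [a /andP[/eqP ai /eqP ha] | no_step].
  exact: GapSliceStep.
apply: GapSliceFirst => j uj; rewrite leqNgt; apply/negP => ji.
have ipred : i.-1 < n by have := ltn_ord i; lia.
have := no_step (Ordinal ipred); rewrite /= prednK; last by lia.
rewrite eqxx /= -u_lift => /negbT/eqP; apply.
by apply: (monotone_squeeze u_mono uj erefl); rewrite /= /bump; lia.
Qed.

Lemma gap_step_not_first (a : 'I_n) :
  a.+1 = i -> zms h a = u i -> ~ first_in_fibre u i.
Proof.
move=> ai ha /(_ (lift i a)); rewrite u_lift ha pivot_le_lift => /(_ erefl).
by rewrite leqNgt -ai ltnSn.
Qed.

Lemma first_gap_hat : first_in_fibre u i ->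
  hat (zms h) (widen_ord (leqnSn _) (u i)) = i.
Proof.
move=> first_i; apply/val_inj/hat_eq => [|| j]; first by case: h_typed.
  by rewrite /= -ltnS.
rewrite /= -(u_lift j); case: (leqP i j) => ij.
  by rewrite u_mono // pivot_le_lift.
apply/negbTE; rewrite -ltnNge ltn_neqAle u_mono ?andbT ?lift_le_pivot //.
by apply/eqP => /val_inj /first_i; rewrite pivot_le_lift leqNgt ij.
Qed.

Lemma gap_slice_typed : dom gap_slice = zr A i /\ cod gap_slice = zs Y (u i).
Proof.
case: h_typed => zA zY _ typ_r typ_s.
case: gap_sliceP => [a ai ha | first_i].
  have [_ _ bd bc] := zA a; have [sd sc] := typ_s a.
  rewrite dom_comp ?cod_comp ?bc ?sd // bd sc ha; split=> //.
  by congr (zr A _); apply: val_inj; rewrite /= /bump; lia.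
have [fd fc _ _] := zY (u i); have [rd rc] := typ_r (widen_ord (leqnSn _) (u i)).
by rewrite dom_comp ?cod_comp ?fd ?rc // rd fc first_gap_hat.
Qed.

Definition factor_zmap : zmap A' Y :=
  @ZMap C A' Y u (zmr h)
    (fun j => if unlift i j is Some a then zmsg h a else gap_slice).

Lemma factor_sing_lift a : zmsg factor_zmap (lift i a) = zmsg h a.
Proof. by rewrite /= liftK. Qed.

Lemma factor_sing_gap : zmsg factor_zmap i = gap_slice.
Proof. by rewrite /= unlift_none. Qed.

Lemma factor_gap_fw : comp (zmsg factor_zmap i) (zf A' i) = gap_slice.
Proof.
by rewrite factor_sing_gap zf_insert_gap; case: gap_slice_typed => <- _; rewrite comp_id_r.
Qed.

Lemma factor_gap_bw : comp (zmsg factor_zmap i) (zb A' i) = gap_slice.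
Proof.
by rewrite factor_sing_gap zb_insert_gap; case: gap_slice_typed => <- _; rewrite comp_id_r.
Qed.

Lemma factor_zms : zms factor_zmap = u.
Proof. by []. Qed.

Lemma factor_zmr : zmr factor_zmap = zmr h.
Proof. by []. Qed.

Lemma factor_first : coherent_first factor_zmap.
Proof.
case: h_coherent => h_first _ _ _ j'.
case: (unliftP i j') => [a -> | -> first_i]; rewrite factor_zms factor_zmr.
  move/(first_in_fibre_lift u_lift) => first_a.
  by rewrite factor_sing_lift zf_insert_lift (u_lift a); apply: h_first.
rewrite factor_gap_fw; case: gap_sliceP => [a ai ha | //].
by case: (gap_step_not_first ai ha).
Qed.

Lemma factor_last : coherent_last factor_zmap.
Proof.
case: h_coherent => _ h_last _ h_empty j'.
case: (unliftP i j') => [a -> | -> last_i]; rewrite factor_zms factor_zmr.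
  move/(last_in_fibre_lift u_lift) => last_a.
  by rewrite factor_sing_lift zb_insert_lift (u_lift a); apply: h_last.
rewrite factor_gap_bw; case: gap_sliceP => [a ai ha | first_i].
  rewrite -ha; apply: h_last => j hj.
  have := last_i (lift i j); rewrite factor_zms u_lift hj ha => /(_ erefl).
  by rewrite lift_le_pivot -ai ltnS.
apply: h_empty => j hj; have uj : u (lift i j) = u i by rewrite u_lift.
by have := last_i _ uj; rewrite lift_le_pivot ltnNge -pivot_le_lift (first_i _ uj).
Qed.

Lemma factor_steps : coherent_steps factor_zmap.
Proof.
case: h_coherent => h_first _ h_steps _ j j'; rewrite factor_zms.
case: (unliftP i j) => [a -> | ->]; case: (unliftP i j') => [b -> | ->] jj'.
- have ba : b = a.+1 :> nat by move: jj'; rewrite /= /bump; lia.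
  rewrite !factor_sing_lift zb_insert_lift zf_insert_lift => uab.
  by apply: h_steps ba _; rewrite -!u_lift.
- have ai : a.+1 = i :> nat by move: jj'; rewrite /= /bump; lia.
  rewrite factor_sing_lift zb_insert_lift factor_gap_fw u_lift => ha.
  case: gap_sliceP => [a' a'i _ | first_i]; last by case: (gap_step_not_first ai ha).
  by have -> : a' = a by apply/val_inj/succn_inj; rewrite a'i ai.
- have bi : b = i :> nat by move: jj'; rewrite /= /bump; lia.
  rewrite factor_gap_bw factor_sing_lift zf_insert_lift u_lift => hb.
  case: gap_sliceP => [a ai ha | first_i].
    by apply: h_steps; [rewrite bi ai | rewrite ha hb].
  rewrite hb; symmetry; apply: h_first => k hk.
  have := first_i (lift i k); rewrite u_lift hk -hb pivot_le_lift bi.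
  exact.
- by move: jj'; lia.
Qed.

Lemma factor_empty : coherent_empty factor_zmap.
Proof.
case: h_coherent => _ _ _ h_empty k k_empty; rewrite factor_zmr.
by apply: h_empty => j hj; apply: (k_empty (lift i j)); rewrite factor_zms u_lift.
Qed.

Lemma factor_typed : zmap_typed factor_zmap.
Proof.
case: h_typed => zA zY _ typ_r typ_s; split=> [|||k|j] //.
- exact: insert_zigzag.
- rewrite factor_zmr factor_zms zr_insert_hat -hat_comp //; last exact: lift_monotone.
  by rewrite (@eq_hat _ _ (u \o lift i) _ u_lift).
- case: (unliftP i j) => [a -> | ->]; rewrite factor_zms.
    by rewrite factor_sing_lift zs_insert_lift u_lift.
  by rewrite factor_sing_gap zs_insert_gap; apply: gap_slice_typed.
Qed.

Lemma factor_comp : zcomp factor_zmap (face_zmap A i) = h.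
Proof.
have [s_eq r_eq t_eq] := zcomp_face_zmap factor_typed.
apply: zmap_ext => [j|k|j]; first by rewrite s_eq /= u_lift.
  by rewrite r_eq.
by rewrite t_eq; apply: factor_sing_lift.
Qed.

Lemma factor_unique (v : zmap A' Y) :
  is_zmap v -> zcomp v (face_zmap A i) = h -> zms v = u -> v = factor_zmap.
Proof.
move=> /is_zmapP[v_typed [v_first _ v_steps _]] vh vu.
have [_ r_eq t_eq] := zcomp_face_zmap v_typed.
have v_reg k : zmr v k = zmr h k by rewrite -vh r_eq.
have v_lift a : zmsg v (lift i a) = zmsg h a by rewrite -vh t_eq.
have v_gap : comp (zmsg v i) (zf A' i) = zmsg v i.
  case: v_typed => _ _ _ _ /(_ i) [vd _].
  by rewrite zf_insert_gap -zs_insert_gap -vd comp_id_r.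
apply: zmap_ext => [j | k | j]; [by rewrite vu | exact: v_reg |].
case: (unliftP i j) => [a -> | ->]; first by rewrite factor_sing_lift v_lift.
rewrite factor_sing_gap -v_gap; case: gap_sliceP => [a ai ha | first_i].
  rewrite -(v_steps (lift i a) i) ?v_lift ?zb_insert_lift //.
    by rewrite lift_below ai.
  by rewrite vu u_lift ha.
by rewrite v_first vu // v_reg.
Qed.

Lemma factor_is_zmap : is_zmap factor_zmap.
Proof.
apply/is_zmapP; split; first exact: factor_typed.
split; [exact: factor_first | exact: factor_last | exact: factor_steps |].
exact: factor_empty.
Qed.

Lemma factor_cocartesian :
  exists! v : zmap A' Y, [/\ is_zmap v, zcomp v (face_zmap A i) = h & zms v = u].
Proof.
exists factor_zmap; split=> [|v [v_zmap vh vu]].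
  by split; [exact: factor_is_zmap | exact: factor_comp |].
by rewrite (factor_unique v_zmap vh vu).
Qed.
End Factorisation.

Theorem lemma3p2 (C : Category) (A : zigzag C) (i : 'I_(zlen A).+1) :
  is_zigzag A ->
  is_zmap (face_zmap A i) /\ pi_cocartesian (face_zmap A i).
Proof.
move=> zA; split.
  by apply/is_zmapP; split; [exact: face_zmap_typed | exact: face_zmap_coherent].
move=> Y h /is_zmapP[h_typed h_coherent] u u_mono u_lift.
by apply: factor_cocartesian => // j; rewrite -u_lift.
Qed.
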